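(* Let $u,s,s',V,\alpha$ be real numbers and set $$\overline{u}=2u(s-s'),\qquad \gamma=\frac{s'}{6}(1-\alpha)-u(s-s')V.$$ Define \begin{align*} R_{0,0}&=Vsu-\tfrac12Vs-Vs'u+\tfrac16\alpha s'+su-\tfrac12 s-s'u-\tfrac16 s'+1,\\ R_{0,1}&=Vsu-\tfrac12Vs-Vs'u+\tfrac16\alpha s'+\tfrac13 s',\\ R_{0,2}&=Vsu-\tfrac12Vs-Vs'u+\tfrac16\alpha s'-su+\tfrac12 s+s'u-\tfrac16 s',\\ R_{1,0}&=-2Vsu+2Vs'u-\tfrac13\alpha s'-2su+2s'u+\tfrac13 s',\\ R_{1,1}&=-2Vsu+2Vs'u-\tfrac13\alpha s'-\tfrac23 s'+1,\\ R_{1,2}&=-2Vsu+2Vs'u-\tfrac13\alpha s'+2su-2s'u+\tfrac13 s',\\ R_{2,0}&=Vsu+\tfrac12Vs-Vs'u+\tfrac16\alpha s'+su+\tfrac12 s-s'u-\tfrac16 s',\\ R_{2,1}&=Vsu+\tfrac12Vs-Vs'u+\tfrac16\alpha s'+\tfrac13 s',\\ R_{2,2}&=Vsu+\tfrac12Vs-Vs'u+\tfrac16\alpha s'-su-\tfrac12 s+s'u-\tfrac16 s'+1. \end{align*} Then $R_{i,j}\ge 0$ for all $i,j\in\{0,1,2\}$ if and only if $$\max\bigl(s'-1,\,|\overline{u}|\bigr)\le 2\gamma\le \min\bigl(2-s-|\overline{u}-sV|,\; s-|\overline{u}+sV|,\; s'-|sV|\bigr).$$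
   Context: The quantities $R_{i,j}$ are the entries of the relaxation matrix of the D1Q3 lattice Boltzmann scheme (velocities $-1,0,1$) with relative velocity $u$, advection velocity parameter $V$, equilibrium parameter $\alpha$ and relaxation parameters $s$ (for the first-order moment) and $s'$ (for the second-order moment); their non-negativity is equivalent to the relaxation step preserving non-negativity of the particle distributions. *)

From Stdlib Require Import Reals Lra.
Open Scope R_scope.

Definition ubar (u s s' : R) : R := 2 * u * (s - s').

Definition gamma (u s s' V alpha : R) : R := s' / 6 * (1 - alpha) - u * (s - s') * V.

Definition Rmat (u s s' V alpha : R) (i j : nat) : R :=
  match i, j with
  | 0%nat, 0%nat => V*s*u - 1/2*V*s - V*s'*u + 1/6*alpha*s' + s*u - 1/2*s - s'*u - 1/6*s' + 1
  | 0%nat, 1%nat => V*s*u - 1/2*V*s - V*s'*u + 1/6*alpha*s' + 1/3*s'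
  | 0%nat, 2%nat => V*s*u - 1/2*V*s - V*s'*u + 1/6*alpha*s' - s*u + 1/2*s + s'*u - 1/6*s'
  | 1%nat, 0%nat => -2*V*s*u + 2*V*s'*u - 1/3*alpha*s' - 2*s*u + 2*s'*u + 1/3*s'
  | 1%nat, 1%nat => -2*V*s*u + 2*V*s'*u - 1/3*alpha*s' - 2/3*s' + 1
  | 1%nat, 2%nat => -2*V*s*u + 2*V*s'*u - 1/3*alpha*s' + 2*s*u - 2*s'*u + 1/3*s'
  | 2%nat, 0%nat => V*s*u + 1/2*V*s - V*s'*u + 1/6*alpha*s' + s*u + 1/2*s - s'*u - 1/6*s'
  | 2%nat, 1%nat => V*s*u + 1/2*V*s - V*s'*u + 1/6*alpha*s' + 1/3*s'
  | 2%nat, 2%nat => V*s*u + 1/2*V*s - V*s'*u + 1/6*alpha*s' - s*u - 1/2*s + s'*u - 1/6*s' + 1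
  | _, _ => 0
  end.

(** In the variables [g = 2 gamma], [ubar] and [w = s V] every entry of the
    relaxation matrix is affine: the middle row is [g - ubar], [g + 1 - s'],
    [g + ubar], and the outer rows are halves of [2 - s - g -+ (w - ubar)],
    [s' - g -+ w], [s - g -+ (ubar + w)].  Nonnegativity of the nine entries is
    thus three lower and six upper linear bounds on [g], which the max/min/abs
    formulation packs together. *)

From Stdlib Require Import Reals Lra Lia.
Open Scope R_scope.

Lemma Rmax_le_iff (a b c : R) : Rmax a b <= c <-> a <= c /\ b <= c.
Proof.
  split.
  - intros H; split; eapply Rle_trans; [apply Rmax_l | exact H | apply Rmax_r | exact H].
  - intros [Ha Hb]; now apply Rmax_lub.
Qed.

Lemma Rle_Rmin_iff (c a b : R) : c <= Rmin a b <-> c <= a /\ c <= b.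
Proof.
  split.
  - intros H; split; eapply Rle_trans; [exact H | apply Rmin_l | exact H | apply Rmin_r].
  - intros [Ha Hb]; now apply Rmin_glb.
Qed.

Lemma Rabs_le_iff (x y : R) : Rabs x <= y <-> - y <= x <= y.
Proof. unfold Rabs; destruct (Rcase_abs x); lra. Qed.

Lemma Rle_sub_Rabs_iff (c a x : R) : c <= a - Rabs x <-> c + x <= a /\ c - x <= a.
Proof.
  assert (Habs : c <= a - Rabs x <-> Rabs x <= a - c) by lra.
  rewrite Habs, Rabs_le_iff; lra.
Qed.

Definition Rmat_reduced (g ub w s s' : R) (i j : nat) : R :=
  match i, j with
  | 0%nat, 0%nat => (2 - s - g + ub - w) / 2
  | 0%nat, 1%nat => (s' - g - w) / 2
  | 0%nat, 2%nat => (s - g - ub - w) / 2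
  | 1%nat, 0%nat => g - ub
  | 1%nat, 1%nat => g - s' + 1
  | 1%nat, 2%nat => g + ub
  | 2%nat, 0%nat => (s - g + ub + w) / 2
  | 2%nat, 1%nat => (s' - g + w) / 2
  | 2%nat, 2%nat => (2 - s - g - ub + w) / 2
  | _, _ => 0
  end.

Lemma Rmat_reduce (u s s' V alpha : R) (i j : nat) :
  Rmat u s s' V alpha i j =
  Rmat_reduced (2 * gamma u s s' V alpha) (ubar u s s') (s * V) s s' i j.
Proof.
  unfold Rmat, Rmat_reduced, gamma, ubar.
  destruct i as [|[|[|i]]]; destruct j as [|[|[|j]]]; field.
Qed.

Lemma Rmat_reduced_nonneg_iff (g ub w s s' : R) :
  (forall i j : nat, (i < 3)%nat -> (j < 3)%nat -> 0 <= Rmat_reduced g ub w s s' i j) <->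
  (Rmax (s' - 1) (Rabs ub) <= g /\
   g <= Rmin (Rmin (2 - s - Rabs (ub - w)) (s - Rabs (ub + w))) (s' - Rabs w)).
Proof.
  rewrite Rmax_le_iff, !Rle_Rmin_iff, !Rle_sub_Rabs_iff, Rabs_le_iff.
  split.
  - intros H.
    pose proof (H 0 0 ltac:(auto) ltac:(auto))%nat.
    pose proof (H 0 1 ltac:(auto) ltac:(auto))%nat.
    pose proof (H 0 2 ltac:(auto) ltac:(auto))%nat.
    pose proof (H 1 0 ltac:(auto) ltac:(auto))%nat.
    pose proof (H 1 1 ltac:(auto) ltac:(auto))%nat.
    pose proof (H 1 2 ltac:(auto) ltac:(auto))%nat.
    pose proof (H 2 0 ltac:(auto) ltac:(auto))%nat.
    pose proof (H 2 1 ltac:(auto) ltac:(auto))%nat.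
    pose proof (H 2 2 ltac:(auto) ltac:(auto))%nat.
    simpl in *; lra.
  - intros Hg i j Hi Hj.
    destruct i as [|[|[|i]]]; destruct j as [|[|[|j]]];
      simpl; lra || (exfalso; lia).
Qed.

Theorem proposition2 (u s s' V alpha : R) :
  (forall i j : nat, (i < 3)%nat -> (j < 3)%nat -> 0 <= Rmat u s s' V alpha i j) <->
  (Rmax (s' - 1) (Rabs (ubar u s s')) <= 2 * gamma u s s' V alpha /\
   2 * gamma u s s' V alpha <=
     Rmin (Rmin (2 - s - Rabs (ubar u s s' - s * V)) (s - Rabs (ubar u s s' + s * V)))
          (s' - Rabs (s * V))).
Proof.
  setoid_rewrite Rmat_reduce.
  apply Rmat_reduced_nonneg_iff.
Qed.
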